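(* Let $T$ be a tree with $m$ edges satisfying $\sum_{e_{uv}\in E(T)}(d_u+d_v)=4m$, let $s$ be a positive integer, and let $T_s$ be its $s$-th subdivision tree. Let $T'_s$ be any single-edge division tree of $T_s$. Then $T'_s$ is neutral, and any single-edge division tree $(T'_s)'$ of $T'_s$ is neutral as well.
   Context: All graphs are finite, simple and connected; $d_u$ denotes degree and sums over edges count each edge once. The $s$-th subdivision graph $G_s$ of $G$ is obtained by inserting $s$ new vertices into each edge of $G$. A single-edge division graph $G'$ of $G$ is obtained by inserting one new vertex into one arbitrarily chosen edge of $G$. For a graph $G=(V,E)$ with $m=|E|\geq1$, the assortativity coefficient is $$r(G)=\frac{m^{-1}\sum_{e_{uv}\in E} d_{u}d_{v}-\Big[m^{-1}\sum_{e_{uv}\in E} \tfrac{1}{2}(d_{u}+d_{v})\Big]^{2}}{m^{-1}\sum_{e_{uv}\in E} \tfrac{1}{2}(d^{2}_{u}+d^{2}_{v})-\Big[m^{-1}\sum_{e_{uv}\in E} \tfrac{1}{2}(d_{u}+d_{v})\Big]^{2}},$$ defined whenever the denominator is nonzero; $G$ is neutral if $r(G)$ is defined and equals $0$. *)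

From HB Require Import structures.
From mathcomp Require Import all_boot all_order all_algebra.
Set Implicit Arguments. Unset Strict Implicit. Unset Printing Implicit Defensive.
Import Order.TTheory GRing.Theory Num.Theory.

Record graph := Graph { vert : finType; adj : rel vert }.
Arguments adj : clear implicits.

Definition simple_graph (G : graph) : Prop :=
  symmetric (adj G) /\ irreflexive (adj G).

Definition connected (G : graph) : Prop :=
  forall x y : vert G, connect (adj G) x y.

Definition acyclic (G : graph) : Prop :=
  forall c : seq (vert G), uniq c -> 3 <= size c -> ~~ cycle (adj G) c.

Definition is_tree (G : graph) : Prop :=
  [/\ simple_graph G, connected G & acyclic G].

(* each (undirected) edge counted once, as the pair (u,v) with u before v *)
Definition edges (G : graph) : {set vert G * vert G} :=
  [set p | adj G p.1 p.2 && (enum_rank p.1 < enum_rank p.2)%N].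

Definition deg (G : graph) (x : vert G) : nat := #|[set y | adj G x y]|.

Definition nedges (G : graph) : nat := #|edges G|.

Definition edge_type (G : graph) := {p : vert G * vert G | p \in edges G}.

(* s-th subdivision: each edge (a,b) becomes a path a - (e,0) - ... - (e,s-1) - b *)
Definition subdiv_adj (s : nat) (G : graph)
  (x y : (vert G + (edge_type G * 'I_s))%type) : bool :=
  match x, y with
  | inl a, inl b => (s == 0)%N && adj G a b
  | inl a, inr (e, i) =>
      ((a == (val e).1) && (i == 0 :> nat)) || ((a == (val e).2) && (i == s.-1 :> nat))
  | inr (e, i), inl a =>
      ((a == (val e).1) && (i == 0 :> nat)) || ((a == (val e).2) && (i == s.-1 :> nat))
  | inr (e, i), inr (f, j) => (e == f) && ((i.+1 == j :> nat) || (j.+1 == i :> nat))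
  end.

Definition subdiv (s : nat) (G : graph) : graph :=
  @Graph (vert G + (edge_type G * 'I_s))%type (@subdiv_adj s G).

(* single-edge division: insert one new vertex (None) into the edge {u,v} *)
Definition sdiv1_adj (G : graph) (u v : vert G) (x y : option (vert G)) : bool :=
  match x, y with
  | Some a, Some b => adj G a b && ~~ (((a == u) && (b == v)) || ((a == v) && (b == u)))
  | None, Some b => (b == u) || (b == v)
  | Some a, None => (a == u) || (a == v)
  | None, None => false
  end.

Definition sdiv1 (G : graph) (u v : vert G) : graph :=
  @Graph (option (vert G)) (@sdiv1_adj G u v).

Local Open Scope ring_scope.

(* the three edge averages in the assortativity coefficient *)
Definition avg_prod (G : graph) : rat :=
  (\sum_(p in edges G) ((deg p.1 * deg p.2)%N)%:R) / (nedges G)%:R.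
Definition avg_half_sum (G : graph) : rat :=
  (\sum_(p in edges G) ((deg p.1 + deg p.2)%N)%:R / 2) / (nedges G)%:R.
Definition avg_half_sq (G : graph) : rat :=
  (\sum_(p in edges G) ((deg p.1 ^ 2 + deg p.2 ^ 2)%N)%:R / 2) / (nedges G)%:R.

Definition assort_num (G : graph) : rat := avg_prod G - avg_half_sum G ^+ 2.
Definition assort_den (G : graph) : rat := avg_half_sq G - avg_half_sum G ^+ 2.

Definition assortativity (G : graph) : rat := assort_num G / assort_den G.

(* r(G) is defined (m >= 1, nonzero denominator) and equals 0 *)
Definition neutral (G : graph) : Prop :=
  [/\ (1 <= nedges G)%N, assort_den G != 0 & assortativity G = 0].

(* Call a graph deg2-balanced when it is simple, every edge has an end of
   degree 2, sum_x d_x^2 = 2 sum_x d_x, and some degree lies outside {0, 2}.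
   On such a graph (d_u - 2)(d_v - 2) = 0 on every edge, i.e.
   d_u d_v = 2 (d_u + d_v) - 4.  As sum_{uv} (d_u + d_v) = sum_x d_x^2 = 4m, the
   edge averages of d_u d_v and (d_u + d_v)/2 are 4 and 2, so the numerator of
   r is 4 - 2^2 = 0, while the denominator is
   (sum_x d_x^3 - 8m) / 2m = sum_x d_x (d_x - 2)^2 / 2m > 0.
   For s > 0 the tree T_s is deg2-balanced: the subdivision vertices have
   degree 2 and meet every edge, the old vertices keep their degrees, so the
   degree identity is the hypothesis sum_{uv} (d_u + d_v) = 4m on T; and T has
   a degree outside {0, 2}, since otherwise walking from an edge would close a
   cycle.  Inserting a vertex into an edge adds a vertex of degree 2 and keeps
   all other degrees, so it preserves the invariant. *)

From HB Require Import structures.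
From mathcomp Require Import all_boot all_order all_algebra.
From mathcomp Require Import ring zify.
Set Implicit Arguments. Unset Strict Implicit. Unset Printing Implicit Defensive.
Import Order.TTheory GRing.Theory Num.Theory.

Lemma big_option (R : Type) (idx : R) (op : Monoid.com_law idx) (T : finType)
    (F : option T -> R) :
  \big[op/idx]_(x : option T) F x = op (F None) (\big[op/idx]_(a : T) F (Some a)).
Proof.
rewrite (bigD1 None) //= (reindex_omap Some id) //=; last by case.
by congr (op _ _); apply: eq_bigl => a; rewrite eqxx.
Qed.

Lemma edges_adj (G : graph) (p : vert G * vert G) : p \in edges G -> adj G p.1 p.2.
Proof. by rewrite inE => /andP[]. Qed.

Lemma degE (G : graph) (x : vert G) : deg x = \sum_(y | adj G x y) 1.
Proof. by rewrite /deg sum1_card cardsE. Qed.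

Section SimpleGraph.
Variable G : graph.
Hypothesis adj_sym : symmetric (adj G).
Hypothesis adj_irr : irreflexive (adj G).

Lemma adj_neq (x y : vert G) : adj G x y -> x != y.
Proof. by apply: contraTneq => ->; rewrite adj_irr. Qed.

Lemma edgesC (x y : vert G) :
  adj G x y -> ((y, x) \in edges G) = ((x, y) \notin edges G).
Proof.
move=> xy; have rank_neq : (enum_rank x : nat) != enum_rank y.
  by apply: contraNneq (adj_neq xy) => /ord_inj/enum_rank_inj ->.
by rewrite !inE /= adj_sym xy /= -leqNgt ltn_neqAle eq_sym rank_neq.
Qed.

Lemma edges_antisym (x y : vert G) : (x, y) \in edges G -> (y, x) \notin edges G.
Proof. by move=> xy; rewrite edgesC ?negbK //; apply: edges_adj xy. Qed.

Lemma double_sum_edges (F : vert G -> vert G -> nat) : (forall x y, F x y = F y x) ->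
  2 * \sum_(p in edges G) F p.1 p.2 = \sum_x \sum_(y | adj G x y) F x y.
Proof.
move=> FC; rewrite pair_big_dep [RHS](bigID (mem (edges G))) /= mul2n -addnn.
congr (_ + _).
  by apply: eq_bigl => p; rewrite andb_idl //; apply: edges_adj.
rewrite (reindex_inj (h := fun p : vert G * vert G => (p.2, p.1))) /=; last first.
  by move=> [a b] [c d] [-> ->].
apply: eq_big => [[a b]|[a b] _] /=; last exact: FC.
case: (boolP (adj G a b)) => ab /=; first exact: edgesC.
by rewrite inE /= adj_sym (negbTE ab).
Qed.

Lemma handshake : 2 * nedges G = \sum_(x : vert G) deg x.
Proof.
rewrite /nedges -sum1_card (@double_sum_edges (fun _ _ => 1)) //.
by apply: eq_bigr => x _; rewrite degE.
Qed.

Lemma sum_adj_const (x : vert G) (c : nat) : \sum_(y | adj G x y) c = deg x * c.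
Proof. by rewrite degE big_distrl /=; apply: eq_bigr => y _; rewrite mul1n. Qed.

Lemma sum_edges_endpoints (f : vert G -> nat) :
  \sum_(p in edges G) (f p.1 + f p.2) = \sum_(x : vert G) deg x * f x.
Proof.
apply/eqP; rewrite -(eqn_pmul2l (isT : 0 < 2)); apply/eqP.
rewrite (@double_sum_edges (fun x y => f x + f y)); last by move=> x y; rewrite addnC.
under eq_bigr do rewrite big_split /=.
rewrite big_split /= [X in _ + X](exchange_big_dep xpredT) //= mul2n -addnn.
congr (_ + _); apply: eq_bigr => x _; rewrite -sum_adj_const //.
by apply: eq_bigl => y; rewrite adj_sym.
Qed.

End SimpleGraph.

Lemma neutral_of_edge_sums (G : graph) :
  0 < nedges G ->
  \sum_(p in edges G) (deg p.1 + deg p.2) = 4 * nedges G ->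
  \sum_(p in edges G) deg p.1 * deg p.2 = 4 * nedges G ->
  \sum_(p in edges G) (deg p.1 ^ 2 + deg p.2 ^ 2) != 8 * nedges G ->
  neutral G.
Proof.
move=> m_gt0 sum_add sum_mul sum_sq.
set m := nedges G in m_gt0 sum_add sum_mul sum_sq.
have mR : (m%:R : rat) != 0%R by rewrite pnatr_eq0 -lt0n.
have half_sum : avg_half_sum G = 2%R.
  by rewrite /avg_half_sum -mulr_suml -natr_sum sum_add natrM; field.
have den : assort_den G != 0%R.
  rewrite /assort_den half_sum /avg_half_sq -mulr_suml -natr_sum subr_eq0.
  apply: contra sum_sq => /eqP sq; rewrite -(eqr_nat rat) natrM; apply/eqP.
  set S := ((\sum_(p in edges G) _)%:R)%R in sq *.
  have -> : S = (S / 2 / m%:R * (2 * m%:R))%R by field.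
  by rewrite sq; ring.
split => //.
rewrite /assortativity /assort_num half_sum /avg_prod -natr_sum sum_mul natrM.
by apply/eqP; rewrite mulf_eq0 subr_eq0; apply/orP; left; apply/eqP; field.
Qed.

(* [d (d - 2)^2 >= 0], strictly unless [d] is [0] or [2]. *)
Lemma cube_excess (d : nat) : 4 * (d * d) + ((d != 0) && (d != 2)) <= d * d ^ 2 + 4 * d.
Proof. by case: d => [|[|[|d]]] //=; nia. Qed.

Definition deg2_balanced (G : graph) : Prop :=
  [/\ simple_graph G,
      forall x y : vert G, adj G x y -> deg x = 2 \/ deg y = 2,
      \sum_(x : vert G) deg x * deg x = \sum_(x : vert G) 2 * deg x
    & exists2 w : vert G, deg w != 0 & deg w != 2].

Lemma deg2_balanced_neutral (G : graph) : deg2_balanced G -> neutral G.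
Proof.
case=> -[adj_sym adj_irr] deg2 sum_sq [w w0 w2].
have two_m := handshake adj_sym adj_irr.
have sum_add : \sum_(p in edges G) (deg p.1 + deg p.2) = 4 * nedges G.
  by rewrite sum_edges_endpoints // sum_sq -big_distrr /= -two_m mulnA.
apply: neutral_of_edge_sums => //.
- by rewrite -(ltn_pmul2l (isT : 0 < 2)) two_m (bigD1 w) //=; move: w0; lia.
- have : \sum_(p in edges G) (deg p.1 * deg p.2 + 4)
         = \sum_(p in edges G) 2 * (deg p.1 + deg p.2).
    by apply: eq_bigr => p /edges_adj/deg2 [->|->]; lia.
  by rewrite big_split sum_nat_const -/(nedges G) -big_distrr /= sum_add; lia.
- rewrite (sum_edges_endpoints adj_sym adj_irr (fun x => deg x ^ 2)).
  apply/eqP => sum_cube.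
  have : \sum_(x : vert G) (4 * (deg x * deg x) + ((deg x != 0) && (deg x != 2)))
         <= \sum_(x : vert G) (deg x * deg x ^ 2 + 4 * deg x).
    by apply: leq_sum => x _; apply: cube_excess.
  rewrite big_split [X in _ <= X]big_split /= -!big_distrr /= sum_cube sum_sq.
  by rewrite -big_distrr /= -two_m (bigD1 w) //= w0 w2; lia.
Qed.

Section SingleEdgeDivision.
Variable G : graph.
Hypothesis adj_sym : symmetric (adj G).
Hypothesis adj_irr : irreflexive (adj G).
Variables u v : vert G.
Hypothesis uv : adj G u v.

Let on_uv (a b : vert G) := ((a == u) && (b == v)) || ((a == v) && (b == u)).

Lemma sdiv1_simple : simple_graph (sdiv1 u v).
Proof.
split; last by case=> [a|] //=; rewrite adj_irr.
case=> [a|] [b|] //=; rewrite adj_sym; congr (_ && ~~ _).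
by rewrite orbC [(b == u) && _]andbC [(b == v) && _]andbC.
Qed.

Lemma on_uv_inj (a b c : vert G) : on_uv a b -> on_uv a c -> b = c.
Proof.
have u_neq_v := adj_neq adj_irr uv.
by case/orP=> /andP[/eqP-> /eqP->] /orP[]/andP[/eqP a_eq /eqP->] //;
  move: u_neq_v; rewrite a_eq eqxx.
Qed.

Lemma deg_sdiv1_None : deg (None : vert (sdiv1 u v)) = 2.
Proof.
rewrite /deg (_ : [set y | _] = [set Some u; Some v]).
  by rewrite cards2 (inj_eq (@Some_inj _)) (adj_neq adj_irr uv).
by apply/setP => -[b|]; rewrite !inE //= (inj_eq (@Some_inj _)).
Qed.

Lemma deg_sdiv1_Some (a : vert G) : deg (Some a : vert (sdiv1 u v)) = deg a.
Proof.
pose h b : vert (sdiv1 u v) := if on_uv a b then None else Some b.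
rewrite /deg -[RHS](@card_in_imset _ _ h); last first.
  move=> b c _ _; rewrite /h.
  case: ifP => ab; case: ifP => ac //; last by case.
  by move=> _; apply: on_uv_inj ab ac.
apply: eq_card => -[b|]; rewrite inE /=; apply/idP/imsetP.
- by case/andP=> ab not_uv; exists b; rewrite ?inE // /h ifN.
- by case=> c; rewrite inE /h => ac; case: ifP => // not_uv [->]; rewrite ac; apply/negbT.
- rewrite /h /on_uv => /orP[]/eqP->; [exists v | exists u];
    by rewrite ?inE ?eqxx ?orbT // adj_sym.
- by case=> c _; rewrite /h; case: ifP => // /orP[]/andP[-> _]; rewrite ?orbT.
Qed.

End SingleEdgeDivision.

Lemma deg2_balanced_sdiv1 (G : graph) (u v : vert G) :
  deg2_balanced G -> adj G u v -> deg2_balanced (sdiv1 u v).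
Proof.
case=> -[adj_sym adj_irr] deg2 sum_sq [w w0 w2] uv.
have degN := deg_sdiv1_None adj_irr uv.
have degS := deg_sdiv1_Some adj_sym adj_irr uv.
split.
- exact: sdiv1_simple.
- move=> [a|] [b|] //= ab; rewrite ?degN ?degS;
    [by case/andP: ab => /deg2 | by right | by left].
- rewrite !big_option degN; under eq_bigr do rewrite degS.
  by under [in RHS]eq_bigr do rewrite degS; rewrite sum_sq.
- by exists (Some w); rewrite degS.
Qed.

Section Subdivision.
Variable T : graph.
Hypothesis adj_sym : symmetric (adj T).
Hypothesis adj_irr : irreflexive (adj T).
Variable n : nat.
Local Notation Ts := (subdiv n.+1 T).

Lemma subdiv_simple : simple_graph Ts.
Proof.
split; first by case=> [a|[e i]] [b|[f j]] //=; rewrite eq_sym orbC.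
by case=> [a|[e i]] //=; rewrite eqxx orbb /=; apply/negP => /eqP; lia.
Qed.

Lemma edge_end_neq (e : edge_type T) : (val e).1 != (val e).2.
Proof. exact: (adj_neq adj_irr (edges_adj (valP e))). Qed.

Lemma deg_subdiv_inr (e : edge_type T) (i : 'I_n.+1) : deg (inr (e, i) : vert Ts) = 2.
Proof.
have lt_i_n1 := ltn_ord i.
pose prev : vert Ts := if i == 0 :> nat then inl (val e).1 else inr (e, inord i.-1).
pose next : vert Ts := if i == n :> nat then inl (val e).2 else inr (e, inord i.+1).
have prev_neq_next : prev != next.
  rewrite /prev /next; case: ifP => i0; case: ifP => i_n //=.
    by rewrite (inj_eq (@inl_inj _ _)) edge_end_neq.
  by apply/eqP => -[] /(congr1 val) /=; rewrite !inordK; lia.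
rewrite /deg (_ : [set y | _] = [set prev; next]) ?cards2 ?prev_neq_next //.
apply/setP => y; rewrite !inE; apply/idP/idP; last first.
  case/orP=> /eqP->; rewrite /prev /next; case: ifP => /eqP i_end;
    by rewrite /= ?i_end ?eqxx ?orbT ?inordK //=; lia.
case: y => [a|[f j]] /=.
  by case/orP=> /andP[/eqP-> /eqP i_end]; rewrite /prev /next i_end !eqxx ?orbT.
have lt_j_n1 := ltn_ord j.
case/andP=> /eqP<- /orP[]/eqP ij; apply/orP; [right | left]; rewrite /prev /next.
- case: ifP => [/eqP|_]; first lia.
  by apply/eqP; congr (inr (_, _)); apply: val_inj; rewrite /= inordK; lia.
- case: ifP => [/eqP|_]; first lia.
  by apply/eqP; congr (inr (_, _)); apply: val_inj; rewrite /= inordK; lia.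
Qed.

Definition other_end (a : vert T) (e : edge_type T) : vert T :=
  if (val e).1 == a then (val e).2 else (val e).1.

Lemma subdiv_adj_inl (a : vert T) (e : edge_type T) (i : 'I_n.+1) :
  adj Ts (inl a) (inr (e, i)) ->
  (val e = (a, other_end a e) /\ i = 0 :> nat) \/
  (val e = (other_end a e, a) /\ i = n :> nat).
Proof.
rewrite /other_end; case: e => -[x y] /= _.
by case/orP=> /andP[/eqP<- /eqP->]; [left | right; case: eqP => [->|]]; rewrite ?eqxx.
Qed.

Lemma deg_subdiv_inl (a : vert T) : deg (inl a : vert Ts) = deg a.
Proof.
pose f (y : vert Ts) : vert T := if y is inr (e, _) then other_end a e else a.
rewrite /deg -[LHS](@card_in_imset _ _ f); last first.
  move=> y1 y2; rewrite !inE; case: y1 => [//|[e1 i1]]; case: y2 => [//|[e2 i2]].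
  move=> /subdiv_adj_inl e1a /subdiv_adj_inl e2a /= o12.
  case: e1a e2a => -[v1 i1E] [] [v2 i2E]; first
    [ by congr (inr (_, _)); apply: val_inj; rewrite /= ?v1 ?v2 ?o12 ?i1E ?i2E
    | by have := valP e1; rewrite v1 => /(edges_antisym adj_sym adj_irr);
         rewrite o12 -v2 (valP e2) ].
apply: eq_card => b; rewrite [RHS]in_set.
apply/imsetP/idP => [[[a'|[e i]]]|ab]; rewrite ?inE //=.
  case/subdiv_adj_inl=> [[e_a _]|[e_a _]] ->; have := edges_adj (valP e);
    by rewrite e_a //= adj_sym.
have [ab_E | /negbTE ab_nE] := boolP ((a, b) \in edges T).
  by exists (inr (Sub (a, b) ab_E, ord0)); rewrite ?inE /= /other_end /= ?eqxx.
have ba_E : (b, a) \in edges T by rewrite edgesC // ab_nE.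
exists (inr (Sub (b, a) ba_E, ord_max)); rewrite ?inE /= /other_end /= ?eqxx ?orbT //.
by rewrite eq_sym (negbTE (adj_neq adj_irr ab)).
Qed.

End Subdivision.

Lemma deg2_balanced_subdiv (T : graph) (n : nat) :
  simple_graph T -> (exists2 w : vert T, deg w != 0 & deg w != 2) ->
  \sum_(p in edges T) (deg p.1 + deg p.2) = 4 * nedges T ->
  deg2_balanced (subdiv n.+1 T).
Proof.
case=> adj_sym adj_irr [w w0 w2] sum_add.
have degl := deg_subdiv_inl adj_sym adj_irr n.
have degr := deg_subdiv_inr adj_irr (n := n).
split.
- exact: subdiv_simple.
- by case=> [x|[e i]] [y|[f j]] //= _; rewrite ?degr; [right | left | left].
- rewrite !big_sumType /=; congr (_ + _); last by apply: eq_bigr => -[e i] _; rewrite degr.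
  under eq_bigr do rewrite degl; under [RHS]eq_bigr do rewrite degl.
  rewrite -sum_edges_endpoints // sum_add -big_distrr /= -handshake //; lia.
- by exists (inl w); rewrite degl.
Qed.

Section CycleOfDegreesZeroTwo.
Variable G : graph.
Hypothesis adj_sym : symmetric (adj G).
Hypothesis adj_irr : irreflexive (adj G).
Hypothesis deg02 : forall x : vert G, deg x = 0 \/ deg x = 2.

Lemma adj_other (x y : vert G) : adj G x y -> exists2 z, adj G x z & z != y.
Proof.
move=> xy; have : 0 < #|[set z | adj G x z] :\ y|.
  by have := deg02 x; rewrite /deg (cardsD1 y) inE xy; lia.
by case/card_gt0P => z; rewrite !inE => /andP[zy xz]; exists z.
Qed.

Lemma path_extends_to_cycle (k : nat) (x y : vert G) (t : seq (vert G)) :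
  #|vert G| - size t <= k -> uniq [:: x, y & t] -> path (adj G) x (y :: t) ->
  exists c : seq (vert G), [/\ uniq c, 3 <= size c & cycle (adj G) c].
Proof.
elim: k x y t => [|k IHk] x y t size_t uniq_xyt xyt;
  have /= size_le : size [:: x, y & t] <= #|vert G|
    by rewrite -(card_uniqP uniq_xyt) max_card.
  by move: size_t; rewrite leqn0 subn_eq0 => /(leq_trans size_le); rewrite ltnNge leqnSn.
have [z xz z_y] := adj_other (andP xyt).1.
have z_x : z != x by apply: adj_neq adj_irr _ _ _; rewrite adj_sym.
have [z_t | z_t] := boolP (z \in t); last first.
  apply: (IHk z x (y :: t)); first by rewrite [size _]/=; lia.
    by move: uniq_xyt; rewrite /= !inE !negb_or z_x z_y z_t.
  by rewrite /= adj_sym xz.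
case/splitPr: z_t uniq_xyt xyt => t1 t2 uniq_xyt xyt.
exists [:: x, y & rcons t1 z]; split.
- by move: uniq_xyt; rewrite -cats1 -!cat_cons -[z :: t2]cat1s catA cat_uniq => /and3P[].
- by rewrite /= size_rcons.
- rewrite /= rcons_path last_rcons rcons_path [adj G z x]adj_sym xz andbT.
  by move: xyt; rewrite /= cat_path /= => /andP[-> /and3P[-> -> _]].
Qed.

Lemma deg02_adj_cycle (x y : vert G) :
  adj G x y -> exists c : seq (vert G), [/\ uniq c, 3 <= size c & cycle (adj G) c].
Proof.
move=> xy; apply: (@path_extends_to_cycle #|vert G| x y [::]).
all: by rewrite /= ?subn0 ?xy ?inE ?(adj_neq adj_irr xy).
Qed.

End CycleOfDegreesZeroTwo.

Lemma acyclic_deg_neq02 (G : graph) (x y : vert G) :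
  simple_graph G -> acyclic G -> adj G x y ->
  exists2 w : vert G, deg w != 0 & deg w != 2.
Proof.
case=> adj_sym adj_irr G_acyclic xy.
have [w /andP[w0 w2] | deg02] :=
  pickP (fun w : vert G => (deg w != 0) && (deg w != 2)); first by exists w.
have [|c [uniq_c size_c cycle_c]] := deg02_adj_cycle adj_sym adj_irr _ xy.
  move=> w; move/negbT: (deg02 w); rewrite negb_and !negbK.
  by case/orP=> /eqP; [left | right].
by have := G_acyclic c uniq_c size_c; rewrite cycle_c.
Qed.

Theorem corollary1 (T : graph) :
  is_tree T ->
  (\sum_(p in edges T) (deg p.1 + deg p.2) = 4 * nedges T)%N ->
  forall s : nat, (0 < s)%N ->
  forall u v : vert (subdiv s T), adj (subdiv s T) u v ->
    neutral (sdiv1 u v) /\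
    (forall x y : vert (sdiv1 u v), adj (sdiv1 u v) x y -> neutral (sdiv1 x y)).
Proof.
move=> [T_simple _ T_acyclic] sum_add [//|n] _ u v uv.
have [a [b ab]] : exists a b, adj T a b.
  case: u uv => [a|[e i]]; [case: v => [b|[e i]] // _ | move=> _];
    by exists (val e).1, (val e).2; apply: edges_adj (valP e).
have Ts_balanced := deg2_balanced_subdiv n T_simple
  (acyclic_deg_neq02 T_simple T_acyclic ab) sum_add.
have Ts'_balanced := deg2_balanced_sdiv1 Ts_balanced uv.
split; first exact: deg2_balanced_neutral.
by move=> x y xy; apply/deg2_balanced_neutral/deg2_balanced_sdiv1.
Qed.
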